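(* Let $G$ be a connected graph with vertex set $\{u_1,\dots,u_n\}$, $n\ge2$, with non-singleton true twin equivalence classes $U_1,\dots,U_k$, and let $\mathcal{H}=\{H_1,\dots,H_n\}$ be a family of non-empty graphs (each having at least one edge). Then $$\dim_l(G\circ\mathcal{H})=\sum_{i=1}^n\operatorname{adim}_l(H_i)+\sum_{j:\,I\cap U_j\ne\emptyset}(|I\cap U_j|-1),$$ where $I=\{u_i: H_i\in\mathcal{G}\}$.
   Context: All graphs are finite and simple. $d_G$ is shortest-path distance ($+\infty$ between components), $d_{G,2}=\min\{d_G,2\}$; $s$ distinguishes $x,y$ w.r.t. $d$ if $d(s,x)\ne d(s,y)$. $\dim_l(G)$: minimum size of $S\subseteq V(G)$ such that any two adjacent vertices are distinguished w.r.t. $d_G$ by some vertex of $S$. $\operatorname{adim}_l(H)$: minimum size of $S\subseteq V(H)$ such that any two adjacent vertices are distinguished w.r.t. $d_{H,2}$ by some vertex of $S$; minimum such sets are local adjacency bases. $\mathcal{G}$: class of graphs $H$ such that every local adjacency basis $B$ of $H$ satisfies $B\subseteq N_H(v)$ for some $v\in V(H)$. True twins: $N[x]=N[y]$. Lexicographic product $G\circ\mathcal{H}$: vertex set $\bigcup_i\{u_i\}\times V(H_i)$, $(u_i,v)\sim(u_j,w)$ iff $u_iu_j\in E(G)$, or $i=j$ and $vw\in E(H_i)$. *)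

(* Finite simple graphs are given by a finType of vertices
   and a symmetric irreflexive boolean edge relation. *)
From mathcomp Require Import all_boot.
Set Implicit Arguments. Unset Strict Implicit. Unset Printing Implicit Defensive.

Section Graphs.
Variables (V : finType) (e : rel V).

Definition walkb (k : nat) (x y : V) : bool :=
  [exists p : k.-tuple V, path e x p && (last x p == y)].

(* shortest-path distance; None stands for +infinity (different components).
   In a graph on #|V| vertices every finite distance is < #|V|. *)
Definition dist (x y : V) : option nat :=
  let k := find (fun k => walkb k x y) (iota 0 #|V|) in
  if k < #|V| then Some k else None.

Definition dist2 (x y : V) : nat :=
  if dist x y is Some k then minn k 2 else 2.

Definition local_resolving {D : eqType} (d : V -> V -> D) (S : {set V}) : bool :=
  [forall x, forall y, e x y ==> [exists s in S, d s x != d s y]].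

(* minimum size of such a set (V itself is always one, so the search succeeds) *)
Definition min_local_resolving {D : eqType} (d : V -> V -> D) : nat :=
  find (fun k => [exists S : {set V}, local_resolving d S && (#|S| == k)])
       (iota 0 #|V|.+1).

Definition dim_l : nat := min_local_resolving dist.

Definition adim_l : nat := min_local_resolving dist2.

Definition local_adjacency_basis (B : {set V}) : bool :=
  local_resolving dist2 B && (#|B| == adim_l).

Definition open_nbhd (v : V) : {set V} := [set w | e v w].
Definition closed_nbhd (v : V) : {set V} := v |: open_nbhd v.

Definition in_classG : Prop :=
  forall B : {set V}, local_adjacency_basis B -> exists v : V, B \subset open_nbhd v.

Definition twin_class (x : V) : {set V} :=
  [set y | closed_nbhd y == closed_nbhd x].
Definition twin_classes : {set {set V}} := [set twin_class x | x in V].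
Definition nonsingleton_twin_classes : {set {set V}} :=
  [set U in twin_classes | 1 < #|U|].

Definition has_edge : Prop := exists x y : V, e x y.
Definition simple_graph : Prop := symmetric e /\ irreflexive e.
End Graphs.

Definition lex_rel (n : nat) (eG : rel 'I_n) (T : 'I_n -> finType)
  (E : forall i, rel (T i)) : rel {i : 'I_n & T i} :=
  fun x y => eG (tag x) (tag y) || ((tag x == tag y) && E (tag x) (tagged x) (tagged_as x y)).

(* In G o H, a vertex outside the layer {u_i} x H_i is at the same distance from every
   vertex of that layer, and two vertices of the layer are at distance min(d_{H_i}, 2),
   since u_i has a neighbour in G.  Hence a set S resolves the edges inside layer i iff its
   slice S_i is a local adjacency resolving set of H_i.  An edge between layers i and j is
   resolved by S_k for any layer k adjacent to exactly one of u_i, u_j, so only true twins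
   u_i, u_j need care: their edges are resolved iff one of S_i, S_j is not contained in an
   open neighbourhood.  If H_i is in \mathcal{G}, every local adjacency basis lies in some
   N(v), and adding v to it gives an undominated resolving set; otherwise some basis is
   undominated.  So an optimal S is a basis in every layer, plus one vertex in the layer of
   each member of I except one per twin class. *)

From mathcomp Require Import all_boot.
Set Implicit Arguments. Unset Strict Implicit. Unset Printing Implicit Defensive.

Section FindIota.
Variable N : nat.

Lemma find_iota_spec (f : pred nat) :
  let k := find f (iota 0 N) in
  [/\ k <= N, k < N -> f k & forall j, j < k -> ~~ f j].
Proof.
move=> k; have kN : k <= N by rewrite -[N in _ <= N](size_iota 0) find_size.
split=> // [lt_kN | j lt_jk].
  have hasf : has f (iota 0 N) by rewrite has_find size_iota.
  by have := nth_find 0 hasf; rewrite nth_iota // add0n.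
have := before_find 0 lt_jk.
by rewrite nth_iota ?add0n ?(leq_trans lt_jk) // => ->.
Qed.

Lemma find_iota_first (f : pred nat) k :
  k < N -> f k -> (forall j, j < k -> ~~ f j) -> find f (iota 0 N) = k.
Proof.
move=> lt_kN fk below_k; have [_ f_first below_first] := find_iota_spec f.
case: (ltngtP (find f (iota 0 N)) k) => // lt.
  by have := below_k _ lt; rewrite f_first // (ltn_trans lt).
by have := below_first _ lt; rewrite fk.
Qed.

Lemma find_iota_leq (f g : pred nat) :
  (forall j, g j -> exists2 i, i <= j & f i) ->
  find f (iota 0 N) <= find g (iota 0 N).
Proof.
move=> gf; have [le_fN _ below_f] := find_iota_spec f.
have [_ g_first _] := find_iota_spec g.
case: (ltnP (find g (iota 0 N)) N) => [lt_gN | le_Ng]; last exact: leq_trans le_fN le_Ng.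
have [i le_ig fi] := gf _ (g_first lt_gN).
rewrite leqNgt; apply/negP => lt.
by have := below_f _ (leq_ltn_trans le_ig lt); rewrite fi.
Qed.

End FindIota.

Section Distance.
Variables (V : finType) (e : rel V).

Lemma walkbP k x y :
  reflect (exists p, [/\ size p = k, path e x p & last x p = y]) (walkb e k x y).
Proof.
apply: (iffP existsP) => [[p /andP[p_path /eqP p_last]] | [p [p_size p_path p_last]]].
  by exists p; rewrite size_tuple.
have p_size' : size p == k by apply/eqP.
by exists (Tuple p_size'); rewrite /= p_path p_last eqxx.
Qed.

Lemma walkb0 x y : walkb e 0 x y = (x == y).
Proof. by apply/walkbP/eqP => [[[|? ?] [// _ <-]] | <-]; last exists [::]. Qed.

Lemma walkb1 x y : walkb e 1 x y = e x y.
Proof.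
apply/walkbP/idP => [[p [p_size p_path <-]] | xy]; last by exists [:: y]; rewrite /= xy.
by case: p p_size p_path => [|z []] //= _; rewrite andbT.
Qed.

Lemma dist_walkb k x y : dist e x y = Some k -> walkb e k x y.
Proof.
rewrite /dist; have [_ first_walk _] := find_iota_spec #|V| (fun k => walkb e k x y).
by case: ifP => // lt [<-]; apply: first_walk.
Qed.

Lemma dist_shortest k x y :
  k < #|V| -> walkb e k x y -> (forall j, j < k -> ~~ walkb e j x y) ->
  dist e x y = Some k.
Proof.
by move=> lt_kV k_walk below_k; rewrite /dist (find_iota_first lt_kV k_walk below_k) lt_kV.
Qed.

Lemma dist_refl x : dist e x x = Some 0.
Proof. by apply: dist_shortest; rewrite ?walkb0 //; apply/card_gt0P; exists x. Qed.

Lemma dist_neq0 x y : x != y -> dist e x y != Some 0.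
Proof. by apply: contraNneq => /dist_walkb; rewrite walkb0. Qed.

Lemma dist_neq1 x y : ~~ e x y -> dist e x y != Some 1.
Proof. by apply: contraNneq => /dist_walkb; rewrite walkb1. Qed.

Definition module (C : pred V) : Prop :=
  forall z w v, ~~ C z -> C w -> C v -> e z w -> e z v.

(* Cut the walk just before it first enters [C] and step to [y] instead. *)
Lemma walkb_module (C : pred V) s x y j :
  module C -> ~~ C s -> C x -> C y ->
  walkb e j s x -> exists2 i, i <= j & walkb e i s y.
Proof.
move=> C_module Cs Cx Cy /walkbP[p [p_size p_path p_last]].
have hasC : has C p.
  case/lastP: p p_path p_last {p_size} => [/= _ sx | q z _].
    by rewrite sx Cx in Cs.
  by rewrite last_rcons has_rcons => ->; rewrite Cx.
set m := find C p; set q := take m p.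
have lt_mp : m < size p by rewrite -has_find.
have q_size : size q = m by rewrite size_take lt_mp.
move: p_path; rewrite -(cat_take_drop m p) (drop_nth s lt_mp) cat_path /=.
case/and3P=> q_path q_edge _.
have q_outside : ~~ C (last s q).
  have : last s q \in s :: q by apply: mem_last.
  rewrite inE => /predU1P[-> // | in_q].
  have : ~~ has C q by rewrite /q (has_take _ hasC) ltnn.
  by apply: contra => Cq; apply/hasP; exists (last s q).
exists m.+1; first by rewrite -p_size.
apply/walkbP; exists (rcons q y); rewrite size_rcons q_size last_rcons rcons_path q_path.
by split=> //; apply: C_module q_edge => //; apply: nth_find.
Qed.

Lemma dist_module (C : pred V) s x y :
  module C -> ~~ C s -> C x -> C y -> dist e s x = dist e s y.
Proof.
move=> C_module Cs Cx Cy; rewrite /dist.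
suff -> : find (fun k => walkb e k s x) (iota 0 #|V|) =
          find (fun k => walkb e k s y) (iota 0 #|V|) by [].
by apply/eqP; rewrite eqn_leq; apply/andP; split; apply: find_iota_leq => j;
  apply: (walkb_module C_module).
Qed.

Lemma local_resolvingP {D : eqType} (d : V -> V -> D) (S : {set V}) :
  reflect (forall x y, e x y -> exists2 s, s \in S & d s x != d s y)
          (local_resolving e d S).
Proof.
apply: (iffP forallP) => [res x y xy | res x].
  by have /existsP[s /andP[]] := implyP (forallP (res x) y) xy; exists s.
apply/forallP => y; apply/implyP => /res[s Ss ds]; apply/existsP; exists s.
by rewrite Ss.
Qed.

Lemma local_resolvingS {D : eqType} (d : V -> V -> D) (S S' : {set V}) :
  S \subset S' -> local_resolving e d S -> local_resolving e d S'.
Proof.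
move=> sSS' /local_resolvingP res; apply/local_resolvingP => x y /res[s Ss ds].
by exists s; first exact: subsetP Ss.
Qed.

Lemma min_local_resolving_spec {D : eqType} (d : V -> V -> D) (S0 : {set V}) :
  local_resolving e d S0 ->
  (exists2 S, local_resolving e d S & #|S| = min_local_resolving e d) /\
  (forall S, local_resolving e d S -> min_local_resolving e d <= #|S|).
Proof.
move=> resS0; have resT := local_resolvingS (subsetT S0) resS0.
pose f k := [exists S : {set V}, local_resolving e d S && (#|S| == k)].
have fS S : local_resolving e d S -> f #|S|.
  by move=> resS; apply/existsP; exists S; rewrite resS eqxx.
have [_ f_min below_min] := find_iota_spec #|V|.+1 f.
split=> [|S resS]; last by rewrite leqNgt; apply/negP => /below_min; rewrite fS.
have lt_min : min_local_resolving e d < #|V|.+1.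
  by rewrite ltnNge; apply/negP => /below_min; rewrite -cardsT fS.
by have /existsP[S /andP[resS /eqP]] := f_min lt_min; exists S.
Qed.

Lemma min_local_resolving_eq {D : eqType} (d : V -> V -> D) m :
  (exists2 S, local_resolving e d S & #|S| = m) ->
  (forall S, local_resolving e d S -> m <= #|S|) ->
  min_local_resolving e d = m.
Proof.
move=> [S resS <-] lowerS; have [[Smin resSmin <-] lowerSmin] := min_local_resolving_spec resS.
by apply/eqP; rewrite eqn_leq lowerSmin // lowerS.
Qed.

Definition dominated (B : {set V}) : bool := [exists v, B \subset open_nbhd e v].

Lemma notin_classG_undominated :
  ~ in_classG e ->
  exists B, [&& local_resolving e (dist2 e) B, #|B| == adim_l e & ~~ dominated B].
Proof.
move=> not_classG.
have [/existsP // | /existsPn no_undom] :=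
  boolP [exists B, [&& local_resolving e (dist2 e) B, #|B| == adim_l e & ~~ dominated B]].
case: not_classG => B /andP[resB adimB]; apply/existsP.
by have := no_undom B; rewrite resB adimB /= negbK.
Qed.

Section Irreflexive.
Hypothesis e_irr : irreflexive e.

Lemma dist_edge x y : e x y -> dist e x y = Some 1.
Proof.
move=> xy; have neq_xy : x != y by apply: contraTneq xy => ->; rewrite e_irr.
apply: dist_shortest; rewrite ?walkb1 //; last by case=> // _; rewrite walkb0.
by apply/card_gt1P; exists x, y.
Qed.

Lemma dist_two x y z : x != y -> ~~ e x y -> e x z -> e z y -> dist e x y = Some 2.
Proof.
move=> neq_xy nxy xz zy.
have neq_xz : x != z by apply: contraTneq xz => ->; rewrite e_irr.
have neq_zy : z != y by apply: contraTneq zy => ->; rewrite e_irr.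
apply: dist_shortest; last by case=> [|[|]] // _; rewrite ?walkb0 ?walkb1.
  by apply/card_gt2P; exists x, y, z; rewrite neq_xy eq_sym neq_zy eq_sym neq_xz.
by apply/walkbP; exists [:: z; y]; rewrite /= xz zy.
Qed.

Lemma dist2E x y : dist2 e x y = if x == y then 0 else if e x y then 1 else 2.
Proof.
rewrite /dist2; case: eqVneq => [<- | neq_xy]; first by rewrite dist_refl.
case: ifP => [/dist_edge -> // | /negbT nxy].
by case: (dist e x y) (dist_neq0 neq_xy) (dist_neq1 nxy) => [[|[|k]]|].
Qed.

Lemma dist_eq1 x y : (dist e x y == Some 1) = e x y.
Proof. by case: (boolP (e x y)) => [/dist_edge -> | /dist_neq1 /negbTE]. Qed.

Lemma dist_neq_adj s x y : e s x != e s y -> dist e s x != dist e s y.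
Proof. by apply: contra => /eqP dxy; rewrite -!dist_eq1 dxy. Qed.

Lemma local_resolving_dist2T : local_resolving e (dist2 e) setT.
Proof.
apply/local_resolvingP => x y xy; exists x; rewrite // !dist2E eqxx xy.
by case: (eqVneq x y) xy => [-> | //]; rewrite e_irr.
Qed.

Lemma adim_l_spec :
  (exists2 B, local_resolving e (dist2 e) B & #|B| = adim_l e) /\
  (forall B, local_resolving e (dist2 e) B -> adim_l e <= #|B|).
Proof. exact: min_local_resolving_spec local_resolving_dist2T. Qed.

Lemma in_classG_adim_lt (B : {set V}) :
  in_classG e -> local_resolving e (dist2 e) B -> ~~ dominated B -> adim_l e < #|B|.
Proof.
move=> classG resB undomB; have [_ lowerB] := adim_l_spec.
rewrite ltn_neqAle lowerB // andbT; apply: contraNneq undomB => adimB; rewrite /dominated.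
by apply/existsP/classG; rewrite /local_adjacency_basis resB adimB eqxx.
Qed.

End Irreflexive.

Lemma twin_class_refl x : x \in twin_class e x.
Proof. by rewrite inE. Qed.

Lemma twin_class_eq x y : y \in twin_class e x -> twin_class e y = twin_class e x.
Proof. by rewrite inE => /eqP yx; apply/setP => z; rewrite !inE yx. Qed.

Lemma mem_twin_classes (U : {set V}) x : U \in twin_classes e -> (x \in U) = (twin_class e x == U).
Proof.
case/imsetP=> y _ ->; apply/idP/eqP => [/twin_class_eq // | <-].
exact: twin_class_refl.
Qed.

Lemma twin_class_of_mem (U : {set V}) x : U \in twin_classes e -> x \in U -> twin_class e x = U.
Proof. by move=> U_class; rewrite (mem_twin_classes _ U_class) => /eqP. Qed.

Section Simple.
Hypotheses (e_irr : irreflexive e) (e_sym : symmetric e).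

Lemma twin_class_adj x y k :
  y \in twin_class e x -> k != x -> k != y -> e k x = e k y.
Proof.
rewrite inE => /eqP yx kx ky; have := congr1 (fun A : {set V} => k \in A) yx.
by rewrite !inE (negbTE kx) (negbTE ky) /= (e_sym k x) (e_sym k y) => ->.
Qed.

Lemma twin_class_edge x y : y \in twin_class e x -> x != y -> e x y.
Proof.
rewrite inE => /eqP yx neq_xy; have : y \in closed_nbhd e y by rewrite !inE eqxx.
by rewrite yx !inE eq_sym (negbTE neq_xy) e_sym.
Qed.

(* The edge [v w] of a would-be dominator [w] of [v |: B] is not resolved by [B]. *)
Lemma resolving_setU1_undominated (B : {set V}) v :
  local_resolving e (dist2 e) B -> B \subset open_nbhd e v -> ~~ dominated (v |: B).
Proof.
move=> /local_resolvingP resB sBv; apply/existsP => -[w /subsetP sw].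
have wv : e w v by move: (sw v); rewrite !inE eqxx e_sym => /(_ isT).
have [c cB] := resB _ _ wv.
have cv : e c v by move: (subsetP sBv c cB); rewrite inE e_sym.
have cw : e c w by move: (sw c); rewrite !inE cB orbT e_sym => /(_ isT).
have neq_cv : (c == v) = false by apply: contraTF cv => /eqP ->; rewrite e_irr.
have neq_cw : (c == w) = false by apply: contraTF cw => /eqP ->; rewrite e_irr.
by rewrite !dist2E // neq_cv neq_cw cv cw.
Qed.

Lemma in_classG_undominated :
  in_classG e ->
  exists B, [&& local_resolving e (dist2 e) B, #|B| == (adim_l e).+1 & ~~ dominated B].
Proof.
move=> classG; have [[B resB adimB] _] := adim_l_spec e_irr.
have [v sBv] : exists v, B \subset open_nbhd e v.
  by apply: classG; rewrite /local_adjacency_basis resB adimB eqxx.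
have vB : v \notin B by apply: contraTN sBv => vB; apply/subsetPn; exists v; rewrite // inE e_irr.
exists (v |: B); rewrite (local_resolvingS (subsetUr _ _) resB) cardsU1 vB adimB add1n eqxx /=.
exact: resolving_setU1_undominated.
Qed.

End Simple.
End Distance.

Section TwinSurplus.
Variables (V : finType) (e : rel V) (I : {set V}).

Lemma card_twin_partition (A : {set V}) : #|A| = \sum_(U in twin_classes e) #|A :&: U|.
Proof.
rewrite -sum1_card (partition_big (twin_class e) (mem (twin_classes e))) => [|x _]; last first.
  exact: imset_f.
apply: eq_bigr => U U_class; rewrite sum1dep_card; apply: eq_card => x.
by rewrite !inE (mem_twin_classes _ U_class).
Qed.

(* [I] without one representative of each twin class meeting [I]. *)
Definition twin_surplus : {set V} :=
  [set x in I | [pick y in I :&: twin_class e x] != Some x].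

Lemma card_twin_surplusI (U : {set V}) :
  U \in twin_classes e -> #|twin_surplus :&: U| = #|I :&: U| - 1.
Proof.
move=> U_class.
have -> : twin_surplus :&: U = [set x in I :&: U | [pick y in I :&: U] != Some x].
  apply/setP => x; rewrite !inE; case: (boolP (x \in U)) => [xU | _]; last by rewrite !andbF.
  by rewrite (twin_class_of_mem U_class xU) !andbT.
case: pickP => [r rIU | noIU]; last first.
  have -> : I :&: U = set0 by apply/setP => x; rewrite noIU inE.
  by apply/eqP; rewrite cards0 cards_eq0; apply/eqP/setP => x; rewrite !inE.
have -> : [set x in I :&: U | Some r != Some x] = (I :&: U) :\ r.
  by apply/setP => x; rewrite !inE (inj_eq Some_inj) eq_sym andbC.
by rewrite [in RHS](cardsD1 r) rIU add1n subn1.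
Qed.

Lemma twin_surplus_compl_uniq x y :
  x \in I :\: twin_surplus -> y \in I :\: twin_surplus -> y \in twin_class e x -> x = y.
Proof.
have rep z : z \in I :\: twin_surplus -> [pick w in I :&: twin_class e z] = Some z.
  by rewrite in_setD in_set; case: (z \in I); rewrite ?andbF // andbT negbK => /eqP.
by move=> /rep x_rep /rep + /twin_class_eq yx; rewrite yx x_rep => -[].
Qed.

Lemma twin_surplus_min (A : {set V}) :
  (forall x y, x \in I :\: A -> y \in I :\: A -> y \in twin_class e x -> x = y) ->
  #|twin_surplus| <= #|A|.
Proof.
move=> A_rep; rewrite (card_twin_partition twin_surplus) (card_twin_partition A).
apply: leq_sum => U U_class; rewrite card_twin_surplusI // leq_subLR.
rewrite -(cardsID A (I :&: U)) addnC leq_add //; last first.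
  by apply/subset_leq_card/subsetP => x; rewrite !inE => /andP[/andP[_ ->] ->].
apply/card_le1_eqP => x y; rewrite !inE => /and3P[xA xI xU] /and3P[yA yI yU].
apply/esym/A_rep; rewrite ?in_setD ?xA ?xI ?yA ?yI //.
by rewrite (twin_class_of_mem U_class xU).
Qed.

Lemma card_twin_surplus :
  #|twin_surplus| =
  \sum_(U in nonsingleton_twin_classes e | I :&: U != set0) (#|I :&: U| - 1).
Proof.
rewrite (card_twin_partition twin_surplus) big_mkcond [RHS]big_mkcond /=.
apply: eq_bigr => U _; rewrite inE; case: (boolP (U \in twin_classes e)) => //= U_class.
rewrite card_twin_surplusI //; case: ifP => // /nandP[small | /negPn/eqP ->]; last first.
  by rewrite cards0.
apply/eqP; rewrite subn_eq0; apply: leq_trans (subset_leq_card (subsetIr I U)) _.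
by rewrite leqNgt.
Qed.

End TwinSurplus.

Lemma sum_mem_card (V : finType) (A : {set V}) : \sum_(x : V) (x \in A) = #|A|.
Proof. by rewrite -sum1_card [RHS]big_mkcond; apply: eq_bigr => x _; case: (x \in A). Qed.

Lemma connected_neighbour (V : finType) (e : rel V) x :
  1 < #|V| -> (forall y z, connect e y z) -> exists y, e x y.
Proof.
case/card_gt1P => y [z [_ _ neq_yz]] conn.
have [w neq_wx] : exists w, w != x.
  by case: (eqVneq y x) => [yx | ]; [exists z; rewrite -yx eq_sym | exists y].
case/connectP: (conn x w) => -[/= _ wx | y' p /= /andP[xy' _] _]; last by exists y'.
by rewrite wx eqxx in neq_wx.
Qed.

Section LexProduct.
Local Unset Implicit Arguments.
Variables (n : nat) (eG : rel 'I_n) (T : 'I_n -> finType) (E : forall i, rel (T i)).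
Hypotheses (eG_irr : irreflexive eG) (eG_sym : symmetric eG).
Hypotheses (E_irr : forall i, irreflexive (E i)) (E_sym : forall i, symmetric (E i)).
Hypothesis eG_neighbour : forall i, exists j, eG i j.
Hypothesis E_edge : forall i, has_edge (E i).
Local Set Implicit Arguments.

Local Notation P := {i : 'I_n & T i}.
Local Notation eP := (lex_rel eG E).

Lemma lex_rel_layer i (a b : T i) : eP (Tagged T a) (Tagged T b) = E i a b.
Proof. by rewrite /lex_rel /= eG_irr eqxx tagged_asE. Qed.

Lemma lex_rel_tag (x y : P) : tag x != tag y -> eP x y = eG (tag x) (tag y).
Proof. by rewrite /lex_rel => /negbTE->; rewrite orbF. Qed.

Lemma lex_rel_layers i j (a : T i) (b : T j) :
  i != j -> eP (Tagged T a) (Tagged T b) = eG i j.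
Proof. exact: (@lex_rel_tag (Tagged T a) (Tagged T b)). Qed.

Lemma lex_rel_irr : irreflexive eP.
Proof. by case=> i a; rewrite lex_rel_layer E_irr. Qed.

Lemma lex_dist_edge x y : eP x y -> dist eP x y = Some 1.
Proof. exact: dist_edge lex_rel_irr x y. Qed.

(* Non-adjacent vertices of a layer have a common neighbour in any adjacent layer. *)
Lemma lex_dist_layer i (a b : T i) :
  dist eP (Tagged T a) (Tagged T b) = Some (dist2 (E i) a b).
Proof.
rewrite dist2E //; case: eqVneq => [<- | neq_ab]; first exact: dist_refl.
case: ifP => ab; first by rewrite lex_dist_edge ?lex_rel_layer.
have [j ij] := eG_neighbour i; have [c _] := E_edge j.
have neq_ij : i != j by apply: contraTneq ij => ->; rewrite eG_irr.
apply: (@dist_two _ _ lex_rel_irr _ _ (Tagged T c)).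
- by apply: contra_neq neq_ab; apply: eq_from_Tagged.
- by rewrite lex_rel_layer ab.
- by rewrite lex_rel_layers.
- by rewrite lex_rel_layers 1?eq_sym // eG_sym.
Qed.

Lemma lex_dist_twin_layers (s : P) i j (a : T i) (b : T j) :
  j \in twin_class eG i -> tag s != i -> tag s != j ->
  dist eP s (Tagged T a) = dist eP s (Tagged T b).
Proof.
move=> ji si sj; apply: (@dist_module _ _ (fun z : P => (tag z == i) || (tag z == j))).
- move=> z w v; rewrite negb_or => /andP[zi zj] w_ij v_ij.
  have zw : tag z != tag w by case/orP: w_ij => /eqP->.
  have zv : tag z != tag v by case/orP: v_ij => /eqP->.
  have adj_ij := twin_class_adj eG_sym ji zi zj.
  rewrite !lex_rel_tag //.
  by case/orP: w_ij => /eqP->; case/orP: v_ij => /eqP->; rewrite ?adj_ij.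
- by rewrite negb_or si sj.
- by rewrite /= eqxx.
- by rewrite /= eqxx orbT.
Qed.

Lemma lex_dist_other_layer (s : P) i (a b : T i) :
  tag s != i -> dist eP s (Tagged T a) = dist eP s (Tagged T b).
Proof. by move=> si; apply: lex_dist_twin_layers; rewrite ?twin_class_refl. Qed.

Definition slice (S : {set P}) i : {set T i} := [set a | Tagged T a \in S].

Lemma card_slices (S : {set P}) : #|S| = \sum_(i < n) #|slice S i|.
Proof.
rewrite -sum1_card (partition_big (fun x : P => tag x) predT) //=.
apply: eq_bigr => i _; rewrite sum1dep_card -(card_imset _ (@eq_from_Tagged _ T i)).
apply: eq_card => -[k c]; rewrite inE /=.
case: (eqVneq k i) => [ki | neq_ki].
  by subst k; rewrite mem_imset ?inE ?andbT //; apply: eq_from_Tagged.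
rewrite andbF; apply/esym/imsetP => -[a _ /(congr1 tag) /= ki].
by rewrite ki eqxx in neq_ki.
Qed.

Lemma slice_local_resolving (S : {set P}) i :
  local_resolving eP (dist eP) S -> local_resolving (E i) (dist2 (E i)) (slice S i).
Proof.
move=> /local_resolvingP resS; apply/local_resolvingP => a b ab.
have [[k c] cS c_res] := resS (Tagged T a) (Tagged T b) (etrans (lex_rel_layer a b) ab).
case: (eqVneq k i) => [ki | neq_ki]; last first.
  by rewrite (lex_dist_other_layer (s := Tagged T c) a b neq_ki) eqxx in c_res.
subst k; exists c; first by rewrite inE.
by rewrite !lex_dist_layer (inj_eq Some_inj) in c_res.
Qed.

Lemma twin_slices_dominated (S : {set P}) i j :
  local_resolving eP (dist eP) S -> i != j -> j \in twin_class eG i ->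
  ~~ (dominated (E i) (slice S i) && dominated (E j) (slice S j)).
Proof.
move=> /local_resolvingP resS neq_ij ji.
apply/negP => /andP[/existsP[va /subsetP dom_i] /existsP[vb /subsetP dom_j]].
have ij := twin_class_edge eG_sym ji neq_ij.
have [[k c] cS c_res] :=
  resS (Tagged T va) (Tagged T vb) (etrans (lex_rel_layers _ _ neq_ij) ij).
case: (eqVneq k i) => [ki | neq_ki]; first subst k.
  have := dom_i c; rewrite !inE E_sym => /(_ cS) c_va.
  by rewrite !lex_dist_edge ?lex_rel_layer ?lex_rel_layers ?eqxx in c_res.
case: (eqVneq k j) => [kj | neq_kj]; first subst k.
  have := dom_j c; rewrite !inE E_sym => /(_ cS) c_vb.
  by rewrite !lex_dist_edge ?lex_rel_layer ?lex_rel_layers 1?eq_sym 1?eG_sym ?eqxx in c_res.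
by rewrite (lex_dist_twin_layers (s := Tagged T c) va vb ji neq_ki neq_kj) eqxx in c_res.
Qed.

Section Sufficiency.
Variable S : {set P}.
Hypothesis res_slices : forall i, local_resolving (E i) (dist2 (E i)) (slice S i).

Let resolves (x y : P) := exists2 s, s \in S & dist eP s x != dist eP s y.

Lemma resolves_sym x y : resolves x y -> resolves y x.
Proof. by case=> s sS; exists s; rewrite // eq_sym. Qed.

Lemma resolves_adj s x y : s \in S -> eP s x != eP s y -> resolves x y.
Proof. by move=> sS; exists s; last exact: dist_neq_adj lex_rel_irr _ _ _ _. Qed.

Lemma resolves_layer i (a b : T i) : E i a b -> resolves (Tagged T a) (Tagged T b).
Proof.
move=> ab; have /local_resolvingP/(_ a b ab)[c cS c_res] := res_slices i.
exists (Tagged T c); first by rewrite inE in cS.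
by rewrite !lex_dist_layer (inj_eq Some_inj).
Qed.

Lemma resolves_undominated_layer i j (a : T i) (b : T j) :
  eG i j -> ~~ dominated (E i) (slice S i) -> resolves (Tagged T a) (Tagged T b).
Proof.
move=> ij /existsPn/(_ a)/subsetPn[c cS ac].
have neq_ij : i != j by apply: contraTneq ij => ->; rewrite eG_irr.
apply: (@resolves_adj (Tagged T c)); first by rewrite inE in cS.
by rewrite inE in ac; rewrite lex_rel_layer lex_rel_layers // ij E_sym (negbTE ac).
Qed.

(* Some layer [k] is adjacent to exactly one of [i] and [j];
   it meets [S] since [H_k] has an edge. *)
Lemma resolves_nontwin_layers i j (a : T i) (b : T j) :
  eG i j -> j \notin twin_class eG i -> resolves (Tagged T a) (Tagged T b).
Proof.
move=> ij ji.
have [k k_sep] : exists k, (k \in closed_nbhd eG i) != (k \in closed_nbhd eG j).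
  apply/existsP; apply: contraR ji => /existsPn same; rewrite inE; apply/eqP/setP => k.
  by have := same k; rewrite negbK => /eqP.
have neq_ki : k != i by apply: contraNneq k_sep => ->; rewrite !inE eqxx (eG_sym j) ij orbT.
have neq_kj : k != j by apply: contraNneq k_sep => ->; rewrite !inE eqxx ij orbT.
have [x [y xy]] := E_edge k.
have /local_resolvingP/(_ x y xy)[c cS _] := res_slices k.
apply: (@resolves_adj (Tagged T c)); first by rewrite inE in cS.
move: k_sep; rewrite !inE (negbTE neq_ki) (negbTE neq_kj) /=.
by rewrite !lex_rel_layers // !(eG_sym k).
Qed.

Lemma lex_local_resolving :
  (forall i j, i != j -> j \in twin_class eG i ->
     ~~ (dominated (E i) (slice S i) && dominated (E j) (slice S j))) ->
  local_resolving eP (dist eP) S.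
Proof.
move=> twins_undom; apply/local_resolvingP => -[i a] [j b].
case: (eqVneq i j) => [eq_ij | neq_ij].
  by subst j; rewrite lex_rel_layer; apply: resolves_layer.
rewrite lex_rel_layers // => ij.
have [ji | /(resolves_nontwin_layers a b ij)//] := boolP (j \in twin_class eG i).
case/nandP: (twins_undom _ _ neq_ij ji) => [undom_i | undom_j].
  exact: resolves_undominated_layer.
by apply/resolves_sym/resolves_undominated_layer; rewrite // eG_sym.
Qed.

End Sufficiency.

Variable I : {set 'I_n}.
Hypothesis I_classG : forall i, i \in I <-> in_classG (E i).

Local Notation X := (twin_surplus eG I).

Lemma twin_surplus_sub : X \subset I.
Proof. by apply/subsetP => i; rewrite inE => /andP[]. Qed.

Definition layer_choice i (B : {set T i}) : bool :=
  [&& local_resolving (E i) (dist2 (E i)) B, #|B| == adim_l (E i) + (i \in X)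
    & (i \in I :\: X) || ~~ dominated (E i) B].

Lemma layer_choice_exists i : exists B : {set T i}, layer_choice B.
Proof.
have [iX | iX] := boolP (i \in X).
  have /I_classG classG := subsetP twin_surplus_sub i iX.
  have [B /and3P[resB cardB undomB]] := in_classG_undominated (E_irr i) (E_sym i) classG.
  by exists B; rewrite /layer_choice resB iX addn1 cardB undomB orbT.
have [iI | iI] := boolP (i \in I).
  have [[B resB cardB] _] := adim_l_spec (E_irr i).
  by exists B; rewrite /layer_choice resB cardB (negbTE iX) addn0 eqxx in_setD iX iI.
have not_classG : ~ in_classG (E i) by move/I_classG; apply/negP.
have [B /and3P[resB cardB undomB]] := notin_classG_undominated not_classG.
by exists B; rewrite /layer_choice resB (negbTE iX) addn0 cardB undomB orbT.
Qed.

Definition lex_basis : {set P} :=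
  [set x | tagged x \in xchoose (layer_choice_exists (tag x))].

Lemma slice_lex_basis i : slice lex_basis i = xchoose (layer_choice_exists i).
Proof. by apply/setP => a; rewrite !inE. Qed.

Lemma lex_basis_resolving : local_resolving eP (dist eP) lex_basis.
Proof.
apply: lex_local_resolving => [i | i j neq_ij ji]; rewrite !slice_lex_basis.
  by case/and3P: (xchooseP (layer_choice_exists i)).
case/and3P: (xchooseP (layer_choice_exists i)) => _ _ /orP[iIX | /negbTE-> //].
case/and3P: (xchooseP (layer_choice_exists j)) => _ _ /orP[jIX | /negbTE->]; last first.
  by rewrite andbF.
by rewrite (twin_surplus_compl_uniq iIX jIX ji) eqxx in neq_ij.
Qed.

Lemma card_lex_basis : #|lex_basis| = \sum_(i < n) adim_l (E i) + #|X|.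
Proof.
rewrite card_slices -sum_mem_card -big_split; apply: eq_bigr => i _.
by rewrite slice_lex_basis; case/and3P: (xchooseP (layer_choice_exists i)) => _ /eqP.
Qed.

Lemma lex_local_resolving_card (S : {set P}) :
  local_resolving eP (dist eP) S -> \sum_(i < n) adim_l (E i) + #|X| <= #|S|.
Proof.
move=> resS; set ND := [set i in I | ~~ dominated (E i) (slice S i)].
have layer_bound i : adim_l (E i) + (i \in ND) <= #|slice S i|.
  have res_i := slice_local_resolving i resS; have [_ lower_i] := adim_l_spec (E_irr i).
  rewrite inE; case: (boolP (i \in I)) => [iI | _]; last by rewrite addn0 lower_i.
  case: (boolP (dominated _ _)) => [_ | undom]; first by rewrite addn0 lower_i.
  by rewrite addn1 in_classG_adim_lt //; apply/I_classG.
have dominated_compl i : i \in I :\: ND -> dominated (E i) (slice S i).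
  by rewrite !inE andbC; case: (i \in I) => //= /negPn.
have surplus_ND : #|X| <= #|ND|.
  apply: twin_surplus_min => i j iND jND ji; case: (eqVneq i j) => [// | neq_ij].
  by have := twin_slices_dominated resS neq_ij ji; rewrite !dominated_compl.
apply: leq_trans (leq_add (leqnn _) surplus_ND) _.
by rewrite card_slices -sum_mem_card -big_split leq_sum.
Qed.

Lemma lex_dim_l : dim_l eP = \sum_(i < n) adim_l (E i) + #|X|.
Proof.
apply: min_local_resolving_eq; last exact: lex_local_resolving_card.
by exists lex_basis; [exact: lex_basis_resolving | exact: card_lex_basis].
Qed.

End LexProduct.

Theorem mainTheorem2 (n : nat) (eG : rel 'I_n)
  (T : 'I_n -> finType) (E : forall i, rel (T i)) :
  2 <= n ->
  simple_graph eG ->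
  (forall x y : 'I_n, connect eG x y) ->
  (forall i, simple_graph (E i)) ->
  (forall i, has_edge (E i)) ->
  forall I : {set 'I_n},
  (forall i, i \in I <-> in_classG (E i)) ->
  dim_l (lex_rel eG E) =
    \sum_(i < n) adim_l (E i)
    + \sum_(U in nonsingleton_twin_classes eG | I :&: U != set0) (#|I :&: U| - 1).
Proof.
move=> n_gt1 [eG_sym eG_irr] eG_connected E_simple E_edge I I_classG.
have E_sym i : symmetric (E i) by case: (E_simple i).
have E_irr i : irreflexive (E i) by case: (E_simple i).
have eG_neighbour i : exists j, eG i j.
  by apply: connected_neighbour; rewrite ?card_ord.
by rewrite (lex_dim_l eG_irr eG_sym E_irr E_sym eG_neighbour E_edge I_classG) card_twin_surplus.
Qed.
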